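(* Let $(V,C,[p_{i,c}],k)$ be an ABC instance under the Candidate-Probability model with $0<p_{i,c}<1$ for all voters $i\in V$ and all candidates $c\in C$. Then a committee $W\subseteq C$ with $|W|=k$ satisfies JR with respect to every plausible approval profile if and only if $W=C$ and $k=|C|$.
   Context: An ABC instance consists of voters $V=[n]$, candidates $C=[m]$, an approval profile $A=(A_1,\dots,A_n)$ with $A_i\subseteq C$, and a positive integer $k$. A committee is a set $W\subseteq C$ with $|W|=k$. $W$ satisfies justified representation (JR) with respect to $A$ if for every $V'\subseteq V$ with $|V'|\ge \frac{n}{k}$ and $\bigcap_{i\in V'}A_i\neq\emptyset$, there is $i\in V'$ with $A_i\cap W\neq\emptyset$. In the Candidate-Probability model each voter $i$ approves each candidate $c$ independently with probability $p_{i,c}$. A plausible approval profile is one with positive probability. *)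

From mathcomp Require Import all_boot all_order all_algebra.
Set Implicit Arguments. Unset Strict Implicit. Unset Printing Implicit Defensive.
Import Order.TTheory GRing.Theory Num.Theory.
Local Open Scope ring_scope.

Definition profile_prob (R : numDomainType) (n m : nat)
  (p : 'I_n -> 'I_m -> R) (A : 'I_n -> {set 'I_m}) : R :=
  \prod_(i < n) \prod_(c < m) (if c \in A i then p i c else 1 - p i c).

Definition plausible (R : numDomainType) (n m : nat)
  (p : 'I_n -> 'I_m -> R) (A : 'I_n -> {set 'I_m}) : Prop :=
  0 < profile_prob p A.

Definition JR (n m : nat) (A : 'I_n -> {set 'I_m}) (k : nat) (W : {set 'I_m}) : Prop :=
  forall V' : {set 'I_n},
    (n%:R / k%:R <= (#|V'|%:R : rat)) ->
    (\bigcap_(i in V') A i != set0) ->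
    exists2 i, i \in V' & A i :&: W != set0.

(* Because every p_{i,c} lies strictly between 0 and 1, every approval profile
   is plausible.  If some candidate c is missing from W, the profile in which
   every voter approves exactly c makes all n voters a cohesive group left
   unrepresented.  Conversely the full committee represents every voter who
   approves anything, and for n, k > 0 a group of size at least n/k is
   nonempty. *)
From mathcomp Require Import all_boot all_order all_algebra.
Set Implicit Arguments. Unset Strict Implicit. Unset Printing Implicit Defensive.
Import Order.TTheory GRing.Theory Num.Theory.
Local Open Scope ring_scope.

Lemma plausible_interior (R : numDomainType) (n m : nat)
    (p : 'I_n -> 'I_m -> R) (A : 'I_n -> {set 'I_m}) :
  (forall i c, 0 < p i c /\ p i c < 1) -> plausible p A.
Proof.
move=> hp; apply: prodr_gt0 => i _; apply: prodr_gt0 => c _.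
have [p_gt0 p_lt1] := hp i c.
by case: ifP; rewrite ?subr_gt0.
Qed.

Lemma JR_const_mem (n m k : nat) (c : 'I_m) (W : {set 'I_m}) :
  (0 < k)%N -> JR (fun _ : 'I_n => [set c]) k W -> c \in W.
Proof.
move=> k_gt0 JRW.
have all_large : n%:R / k%:R <= (#|[set: 'I_n]|%:R : rat).
  by rewrite cardsT card_ord ler_pdivrMr ?ltr0n // -natrM ler_nat leq_pmulr.
have all_cohesive : \bigcap_(i in [set: 'I_n]) [set c] != set0.
  by apply/set0Pn; exists c; apply/bigcapP => i _; rewrite inE.
have [i _ /set0Pn [x]] := JRW _ all_large all_cohesive.
by rewrite !inE => /andP [/eqP ->].
Qed.

Lemma JR_setT (n m k : nat) (A : 'I_n -> {set 'I_m}) :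
  (0 < n)%N -> (0 < k)%N -> JR A k [set: 'I_m].
Proof.
move=> n_gt0 k_gt0 V' V'_large /set0Pn [c /bigcapP c_common].
have /card_gt0P [i i_in] : (0 < #|V'|)%N.
  rewrite -(ltr_nat rat); apply: lt_le_trans V'_large.
  by rewrite divr_gt0 ?ltr0n.
by exists i => //; apply/set0Pn; exists c; rewrite setIT c_common.
Qed.

Theorem lemma2 (R : realFieldType) (n m k : nat) (p : 'I_n -> 'I_m -> R)
  (hn : (0 < n)%N) (hk : (0 < k)%N)
  (hp : forall (i : 'I_n) (c : 'I_m), 0 < p i c /\ p i c < 1)
  (W : {set 'I_m}) (hW : #|W| = k) :
  (forall A : 'I_n -> {set 'I_m}, plausible p A -> JR A k W)
  <-> (W = [set: 'I_m] /\ k = m).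
Proof.
split=> [JRW | [-> _] A _]; last exact: JR_setT.
have W_full : W = [set: 'I_m].
  apply/setP => c; rewrite inE.
  by apply: (JR_const_mem hk); apply: JRW; apply: plausible_interior.
by rewrite -hW W_full cardsT card_ord.
Qed.
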